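(* Let $p\in\mathbb{R}^d$ with $p\neq 0$, put $\hat p=p/\lVert p\rVert$, let $c=\hat c_{\hat p}$ be the class predicted for $\hat p$, and let $c'$ be the class in $\{0,\dots,k-1\}\setminus\{c\}$ with the highest value of $P(\hat c_{\hat p}=c')$. Define $$\epsilon_c=\sqrt{1+\frac{1}{2d}\Big(\hat p^T M^c\hat p-\hat p^T M^{c'}\hat p\Big)}-1,$$ and suppose $\epsilon_c>0$. If $$\lVert p\rVert\ \ge\ \frac{2}{\epsilon_c\sqrt{4-\epsilon_c^2}},$$ then for every $x\in\mathbb{R}^d$ with $\lVert x\rVert=1$, the normalized perturbed input $y=\frac{p+x}{\lVert p+x\rVert}$ is classified as $c$. That is, $P(\hat c_y=c)\ge P(\hat c_y=\tilde c)$ for all $\tilde c\in\{0,\dots,k-1\}$, so $c$ attains the maximum defining $\hat c_y$.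
   Context: Setting (noiseless PQC classifier acting on amplitude-encoded real data). We use the following notation. - $D\ge 0$ and $K\ge 0$ are integers. Put $d=2^D$, $k'=2^K$ and $n=2^{D+K}$. The number of classes $k$ satisfies $1\le k\le k'$. - $U\in\mathbb{C}^{n\times n}$ is a fixed unitary matrix, and $\lVert\cdot\rVert$ denotes the Euclidean norm. - All vectors and matrices are indexed from $0$. - For a unit vector $x\in\mathbb{R}^d$, let $e_0\in\mathbb{C}^{k'}$ be the first standard basis vector, and let $y=U(x\otimes e_0)\in\mathbb{C}^n$. Here $(x\otimes e_0)_{k's}=x_s$ and all other entries of $x\otimes e_0$ are $0$. - For $c\in\{0,\dots,k-1\}$, define the class-$c$ probability $P(\hat c_x=c)=\sum_{t=0}^{d-1}\lvert y_{k't+c}\rvert^2$. This is the probability that measuring the ancillary register gives $c$. - The predicted class is $\hat c_x=\arg\max_{c\in\{0,\dots,k-1\}}P(\hat c_x=c)$. - For each $c$, the $d\times d$ matrix $M^c$ is defined by $M^c_{ij}=\sum_{t=0}^{d-1}U^*_{k't+c,\,k'i}\,U_{k't+c,\,k'j}$, where $^*$ denotes complex conjugation. *)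

From HB Require Import structures.
From mathcomp Require Import all_boot all_order all_algebra.
From mathcomp Require Import spectral.
From mathcomp Require Import complex.
Set Implicit Arguments. Unset Strict Implicit. Unset Printing Implicit Defensive.
Import Order.TTheory GRing.Theory Num.Theory.
Local Open Scope ring_scope.

Section Defs.
Variable R : rcfType.
Local Notation C := R[i].

(* Entry (i, j) of a matrix, with 0-based natural-number indices
   (the unique entry whose row index is i and column index is j). *)
Definition mxat {T : nmodType} m n (A : 'M[T]_(m, n)) (i j : nat) : T :=
  \sum_(a < m | val a == i) \sum_(b < n | val b == j) A a b.

(* x (tensor) e_0, embedded as a complex vector: entry k' s is x_s, others 0. *)
Definition embed (D K : nat) (x : 'cV[R]_(2 ^ D)) : 'cV[C]_(2 ^ (D + K)) :=
  \col_(j < 2 ^ (D + K)) \sum_(s < 2 ^ D | (2 ^ K * s)%N == val j) ((x s 0)%:C)%C.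

Definition outstate (D K : nat) (U : 'M[C]_(2 ^ (D + K))) (x : 'cV[R]_(2 ^ D))
  : 'cV[C]_(2 ^ (D + K)) := U *m embed K x.

Definition prob (D K : nat) (U : 'M[C]_(2 ^ (D + K))) (x : 'cV[R]_(2 ^ D))
  (c : nat) : R :=
  \sum_(t < 2 ^ D) ComplexField.Normc.normc (mxat (outstate U x) (2 ^ K * t + c) 0) ^+ 2.

Definition Mc (D K : nat) (U : 'M[C]_(2 ^ (D + K))) (c : nat) : 'M[C]_(2 ^ D) :=
  \matrix_(i < 2 ^ D, j < 2 ^ D)
    \sum_(t < 2 ^ D) Num.conj (mxat U (2 ^ K * t + c) (2 ^ K * i))
                     * mxat U (2 ^ K * t + c) (2 ^ K * j).

(* q^T M q for a real vector q (a real number since M is Hermitian;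
   we take the real part). *)
Definition qform (d : nat) (M : 'M[C]_d) (q : 'cV[R]_d) : R :=
  complex.Re (\sum_(i < d) \sum_(j < d) ((q i 0)%:C)%C * M i j * ((q j 0)%:C)%C).

Definition vnorm (d : nat) (q : 'cV[R]_d) : R := Num.sqrt (\sum_(i < d) q i 0 ^+ 2).
Definition normalize (d : nat) (q : 'cV[R]_d) : 'cV[R]_d := (vnorm q)^-1 *: q.

End Defs.

From HB Require Import structures.
From mathcomp Require Import all_boot all_order all_algebra.
From mathcomp Require Import spectral complex.
From mathcomp Require Import ring lra.
Set Implicit Arguments. Unset Strict Implicit. Unset Printing Implicit Defensive.
Import Order.TTheory GRing.Theory Num.Theory.
Local Open Scope ring_scope.

(* Write p = r ph with r = |p|.  Each class probability is the squared norm of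
   a vector of amplitudes depending linearly on the input; the quadratic form
   of M^c is that probability, and since U is unitary the probabilities of all
   2^K ancilla outcomes add up to the squared norm of the input.  With
   a = sqrt P_p(c), b = sqrt P_p(c2), a' = sqrt P_x(c), b' = sqrt P_x(c2), the
   triangle inequality (Cauchy-Schwarz on the cross terms) gives
   sqrt P_(p+x)(c) >= a - a' and sqrt P_(p+x)(c2) <= b + b'.  The bound on r
   forces r * (P_ph(c) - P_ph(c')) >= 2, hence a^2 - b^2 >= 2r; together with
   a^2 + b^2 <= r^2 this gives a - b >= sqrt 2 >= a' + b'.  Normalising p + x
   rescales all class probabilities by the same factor. *)

Section RealInequalities.
Variable R : realFieldType.

Lemma discr_le_of_quadratic_ge0 (A X B : R) :
  0 <= A -> (forall l, 0 <= l ^+ 2 * A + 2 * l * X + B) -> X ^+ 2 <= A * B.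
Proof.
move=> A_ge0 quad_ge0; have [A0 | A_neq0] := eqVneq A 0.
  have [-> | X_neq0] := eqVneq X 0; first by rewrite A0 expr0n mul0r.
  have := quad_ge0 (- (B + 1) / (2 * X)).
  have -> : (- (B + 1) / (2 * X)) ^+ 2 * A + 2 * (- (B + 1) / (2 * X)) * X + B = -1.
    by rewrite A0; field.
  by rewrite ler0N1.
have := mulr_ge0 A_ge0 (quad_ge0 (- X / A)).
have -> : A * ((- X / A) ^+ 2 * A + 2 * (- X / A) * X + B) = A * B - X ^+ 2 by field.
by rewrite subr_ge0.
Qed.

Lemma perturbed_margin_sqr (a b a' b' X Y r : R) :
  0 < r -> 0 <= a -> 0 <= b -> 0 <= a' -> 0 <= b' ->
  - (a * a') <= X -> Y <= b * b' ->
  2 * r <= a ^+ 2 - b ^+ 2 -> a ^+ 2 + b ^+ 2 <= r ^+ 2 -> a' ^+ 2 + b' ^+ 2 <= 1 ->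
  b ^+ 2 + 2 * Y + b' ^+ 2 <= a ^+ 2 + 2 * X + a' ^+ 2.
Proof.
move=> r_gt0 a_ge0 b_ge0 a'_ge0 b'_ge0 X_ge Y_le gap_ge sum_le sum'_le.
have b_le_a : b <= a by nra.
have gap_sqr : 2 <= (a - b) ^+ 2.
  have sqrD_le : (a + b) ^+ 2 <= 2 * r ^+ 2 by nra.
  have sqrB_sqrD_ge : 4 * r ^+ 2 <= (a - b) ^+ 2 * (a + b) ^+ 2 by nra.
  have sqrB_sqrD_le : (a - b) ^+ 2 * (a + b) ^+ 2 <= (a - b) ^+ 2 * (2 * r ^+ 2).
    by rewrite ler_wpM2l ?sqr_ge0.
  rewrite -(ler_pM2r (exprn_gt0 2 r_gt0)); lra.
have gap'_sqr : (a' + b') ^+ 2 <= 2 by have := sqr_ge0 (a' - b'); nra.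
have : b + b' <= a - a' by nra.
nra.
Qed.
End RealInequalities.

Section RealClosedInequalities.
Variable R : rcfType.

Lemma perturbed_margin (A B A' B' X Y r : R) :
  0 < r -> 0 <= A -> 0 <= B -> 0 <= A' -> 0 <= B' ->
  X ^+ 2 <= A * A' -> Y ^+ 2 <= B * B' ->
  2 * r <= A - B -> A + B <= r ^+ 2 -> A' + B' <= 1 ->
  B + 2 * Y + B' <= A + 2 * X + A'.
Proof.
move=> r_gt0 A_ge0 B_ge0 A'_ge0 B'_ge0.
rewrite -(sqr_sqrtr A_ge0) -(sqr_sqrtr B_ge0) -(sqr_sqrtr A'_ge0) -(sqr_sqrtr B'_ge0).
set a := Num.sqrt A; set b := Num.sqrt B; set a' := Num.sqrt A'; set b' := Num.sqrt B'.
have [a_ge0 b_ge0 a'_ge0 b'_ge0] : [/\ 0 <= a, 0 <= b, 0 <= a' & 0 <= b'].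
  by rewrite !sqrtr_ge0.
rewrite -!exprMn => X_le Y_le; apply: perturbed_margin_sqr => //.
- have : 0 <= a * a' by rewrite mulr_ge0.
  nra.
- have : 0 <= b * b' by rewrite mulr_ge0.
  nra.
Qed.

(* eps^2 + 2 eps = Delta / (2m) <= Delta / 2 and sqrt (4 - eps^2) <= 2. *)
Lemma eps_margin (m : nat) (Delta r : R) : (0 < m)%N -> Delta <= 1 ->
  let eps := Num.sqrt (1 + ((2 * m)%:R)^-1 * Delta) - 1 in
  0 < eps -> 2 / (eps * Num.sqrt (4 - eps ^+ 2)) <= r -> 2 <= r * Delta.
Proof.
move=> m_gt0 Delta_le1 eps eps_gt0.
set w := ((2 * m)%:R)^-1 : R.
have w_gt0 : 0 < w by rewrite invr_gt0 ltr0n muln_gt0.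
have w_le : 2 * w <= 1.
  have m_ge1 : 1 <= m%:R :> R by rewrite ler1n.
  have : w * (2 * m%:R) = 1 by rewrite /w natrM mulVf // mulf_neq0 ?pnatr_eq0 -?lt0n.
  nra.
have arg_ge0 : 0 <= 1 + w * Delta.
  rewrite leNgt; apply/negP => arg_lt0.
  by move: eps_gt0; rewrite /eps ltr0_sqrtr // sub0r oppr_gt0 ltr10.
have eps_eq : eps ^+ 2 + 2 * eps = w * Delta.
  by rewrite -[w * Delta](addKr 1) -(sqr_sqrtr arg_ge0) /eps; ring.
have Delta_ge : 2 * (eps ^+ 2 + 2 * eps) <= Delta.
  have : 0 < w * Delta by rewrite -eps_eq; nra.
  rewrite pmulr_rgt0 // => Delta_gt0; nra.
have eps_lt1 : eps < 1 by nra.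
set q := Num.sqrt (4 - eps ^+ 2).
have q_gt0 : 0 < q by rewrite sqrtr_gt0; nra.
have q_le2 : q <= 2.
  have : q ^+ 2 = 4 - eps ^+ 2 by rewrite sqr_sqrtr //; nra.
  nra.
rewrite ler_pdivrMr ?mulr_gt0 // => bound.
have epsq_gt0 : 0 < eps * q by rewrite mulr_gt0.
have epsq_le : eps * q <= Delta by nra.
have r_gt0 : 0 < r by nra.
by apply: le_trans bound _; rewrite ler_wpM2l // ltW.
Qed.
End RealClosedInequalities.

Lemma mxat_ord {T : nmodType} m n (A : 'M[T]_(m, n)) (i : 'I_m) (j : 'I_n) :
  mxat A i j = A i j.
Proof.
rewrite /mxat (eq_bigl (pred1 i)) => [|a]; last by rewrite /= val_eqE.
rewrite big_pred1_eq (eq_bigl (pred1 j)) => [|b]; last by rewrite /= val_eqE.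
by rewrite big_pred1_eq.
Qed.

Lemma sum_nat_mul_ord (V : nmodType) m n (F : nat -> V) :
  \sum_(0 <= r < m * n) F r = \sum_(t < m) \sum_(c < n) F (n * t + c)%N.
Proof.
rewrite big_nat_mul big_mkord; apply: eq_bigr => t _.
rewrite mulSn addnC -{1}[(t * n)%N]add0n big_addn addKn big_mkord.
by apply: eq_bigr => c _; rewrite addnC mulnC.
Qed.

Lemma sqr_sum_inj_fiber (R : pzSemiRingType) (I : finType) (g : I -> nat)
    (f : I -> R) j :
  injective g -> (\sum_(s | g s == j) f s) ^+ 2 = \sum_(s | g s == j) f s ^+ 2.
Proof.
move=> g_inj; have [s0 /eqP g_s0 | no_s] := pickP (fun s => g s == j).
  have fiber_s0 : (fun s => g s == j) =1 pred1 s0.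
    by move=> s /=; apply/eqP/eqP => [g_s | -> //]; apply: g_inj; rewrite g_s.
  by rewrite !(eq_bigl _ _ fiber_s0) !big_pred1_eq.
by rewrite !big_pred0 // expr0n.
Qed.

Section ComplexSquares.
Variable R : rcfType.
Local Notation C := R[i].
Local Notation normc := (@ComplexField.Normc.normc R).

Definition dotc (z w : C) : R := complex.Re z * complex.Re w + complex.Im z * complex.Im w.

Lemma normc_sqr (z : C) : normc z ^+ 2 = complex.Re z ^+ 2 + complex.Im z ^+ 2.
Proof. by case: z => a b /=; rewrite sqr_sqrtr // addr_ge0 // sqr_ge0. Qed.

Lemma normc_real_sqr (a : R) : normc (a%:C)%C ^+ 2 = a ^+ 2.
Proof. by rewrite normc_sqr /= expr0n addr0. Qed.

Lemma conj_real (a : R) : Num.conj ((a%:C)%C : C) = (a%:C)%C.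
Proof. exact: conjc_real. Qed.

Lemma Re_conjM (z : C) : complex.Re (Num.conj z * z) = normc z ^+ 2.
Proof. by rewrite normc_sqr; case: z => a b /=; ring. Qed.

Lemma normc_affine_sqr (l : R) (z w : C) :
  normc ((l%:C)%C * z + w) ^+ 2 = l ^+ 2 * normc z ^+ 2 + 2 * l * dotc z w + normc w ^+ 2.
Proof. by rewrite !normc_sqr /dotc; case: z => a b; case: w => c d /=; ring. Qed.

Variable I : finType.
Implicit Types f g : I -> C.

Lemma sum_normc_affine_sqr (l : R) f g :
  \sum_t normc ((l%:C)%C * f t + g t) ^+ 2 =
  l ^+ 2 * (\sum_t normc (f t) ^+ 2) + 2 * l * (\sum_t dotc (f t) (g t))
  + \sum_t normc (g t) ^+ 2.
Proof.
by rewrite (eq_bigr _ (fun t _ => normc_affine_sqr l (f t) (g t))) !big_distrr -!big_split.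
Qed.

Lemma sum_normcD_sqr f g :
  \sum_t normc (f t + g t) ^+ 2 =
  \sum_t normc (f t) ^+ 2 + 2 * (\sum_t dotc (f t) (g t)) + \sum_t normc (g t) ^+ 2.
Proof.
rewrite (eq_bigr (fun t => normc ((1%:C)%C * f t + g t) ^+ 2)) => [|t _]; last first.
  by rewrite mul1r.
by rewrite sum_normc_affine_sqr expr1n !mul1r mulr1.
Qed.

Lemma sum_dotc_sqr_le f g :
  (\sum_t dotc (f t) (g t)) ^+ 2 <= (\sum_t normc (f t) ^+ 2) * (\sum_t normc (g t) ^+ 2).
Proof.
apply: discr_le_of_quadratic_ge0 => [|l]; first by apply: sumr_ge0 => t _; apply: sqr_ge0.
by rewrite -sum_normc_affine_sqr; apply: sumr_ge0 => t _; apply: sqr_ge0.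
Qed.

End ComplexSquares.

Section UnitaryNorm.
Variable R : rcfType.
Local Notation C := R[i].
Local Notation normc := (@ComplexField.Normc.normc R).
Local Open Scope sesquilinear_scope.

Lemma sum_normc_sqr_Re n (z : 'cV[C]_n) :
  \sum_(r < n) normc (z r 0) ^+ 2 = complex.Re ((z ^t* *m z) 0 0).
Proof. by rewrite mxE raddf_sum; apply: eq_bigr => r _; rewrite !mxE -Re_conjM. Qed.

Lemma sqnorm_unitary_mulmx n (V : 'M[C]_n) (z : 'cV[C]_n) : V \is unitarymx ->
  \sum_r normc ((V *m z) r 0) ^+ 2 = \sum_r normc (z r 0) ^+ 2.
Proof.
move=> V_unitary; rewrite !sum_normc_sqr_Re trmx_mul map_mxM -mulmxA (mulmxA (V ^t* )).
by have := mulmxKtV 1%:M V_unitary erefl; rewrite mul1mx => ->; rewrite mul1mx.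
Qed.

End UnitaryNorm.

Section VectorNorm.
Variables (R : rcfType) (d : nat).
Implicit Types q : 'cV[R]_d.

Lemma vnorm_sqr q : vnorm q ^+ 2 = \sum_(i < d) q i 0 ^+ 2.
Proof. by rewrite sqr_sqrtr // sumr_ge0 // => i _; apply: sqr_ge0. Qed.

Lemma vnormZ (a : R) q : vnorm (a *: q) = `|a| * vnorm q.
Proof.
rewrite /vnorm -sqrtr_sqr -sqrtrM ?sqr_ge0 // big_distrr /=.
by congr Num.sqrt; apply: eq_bigr => i _; rewrite mxE exprMn.
Qed.

Lemma vnorm_gt0 q : q != 0 -> 0 < vnorm q.
Proof.
move=> q_neq0; rewrite sqrtr_gt0 lt_def sumr_ge0 ?andbT => [|i _]; last exact: sqr_ge0.
apply: contra q_neq0 => /eqP sum_eq0; apply/eqP/matrixP => i j.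
rewrite ord1 mxE; apply/eqP; rewrite -sqrf_eq0; apply/eqP.
by apply: (psumr_eq0P _ sum_eq0) => // s _; apply: sqr_ge0.
Qed.

Lemma scale_vnorm_normalize q : q != 0 -> vnorm q *: normalize q = q.
Proof. by move=> /vnorm_gt0 /gt_eqF q_neq0; rewrite scalerA divff ?q_neq0 ?scale1r. Qed.

Lemma vnorm_normalize q : q != 0 -> vnorm (normalize q) = 1.
Proof.
move=> /vnorm_gt0 q_gt0; rewrite vnormZ ger0_norm ?invr_ge0 ?ltW //.
by rewrite mulVf // gt_eqF.
Qed.

End VectorNorm.

Section Classifier.
Variables (R : rcfType) (D K : nat) (U : 'M[R[i]]_(2 ^ (D + K))).
Local Notation C := R[i].
Local Notation normc := (@ComplexField.Normc.normc R).
Implicit Types p q x : 'cV[R]_(2 ^ D).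

Definition amp q (i : nat) : C :=
  \sum_(s < 2 ^ D) mxat U i (2 ^ K * s) * ((q s 0)%:C)%C.

Lemma mxat_outstate q i : mxat (outstate U q) i 0 = amp q i.
Proof.
rewrite /mxat /outstate /amp.
under eq_bigr => a _.
  rewrite big_mkcond big_ord1 /= mxE.
  under eq_bigr => j _ do rewrite mxE big_mkcond big_distrr /=.
  rewrite exchange_big /=.
  over.
rewrite exchange_big /=; apply: eq_bigr => s _.
rewrite big_distrl /=; apply: eq_bigr => a _.
rewrite big_distrl /= [RHS]big_mkcond /=; apply: eq_bigr => j _.
by rewrite eq_sym; case: eqP => _; rewrite ?mulr0 ?mul0r.
Qed.

Lemma ampD p x i : amp (p + x) i = amp p i + amp x i.
Proof. by rewrite /amp -big_split; apply: eq_bigr => s _; rewrite mxE rmorphD mulrDr. Qed.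

Lemma ampZ (a : R) q i : amp (a *: q) i = (a%:C)%C * amp q i.
Proof. by rewrite /amp big_distrr; apply: eq_bigr => s _; rewrite mxE rmorphM /=; ring. Qed.

Lemma probE q c : prob U q c = \sum_(t < 2 ^ D) normc (amp q (2 ^ K * t + c)) ^+ 2.
Proof. by apply: eq_bigr => t _; rewrite mxat_outstate. Qed.

Lemma qform_Mc q c : qform (Mc U c) q = prob U q c.
Proof.
rewrite probE /qform.
under [RHS]eq_bigr => t _ do rewrite -Re_conjM.
rewrite -raddf_sum; congr (complex.Re _).
under [RHS]eq_bigr => t _.
  rewrite /amp rmorph_sum big_distrl /=.
  under eq_bigr => i _ do rewrite big_distrr /=.
  over.
rewrite /= [RHS]exchange_big /=; apply: eq_bigr => i _.
rewrite [RHS]exchange_big /=; apply: eq_bigr => j _.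
rewrite mxE big_distrr big_distrl /=; apply: eq_bigr => t _.
by rewrite rmorphM /= conj_real; ring.
Qed.

Lemma prob_ge0 q c : 0 <= prob U q c.
Proof. by apply: sumr_ge0 => t _; apply: sqr_ge0. Qed.

Lemma probZ (a : R) q c : prob U (a *: q) c = a ^+ 2 * prob U q c.
Proof.
rewrite !probE big_distrr; apply: eq_bigr => t _.
by rewrite ampZ ComplexField.Normc.normcM exprMn normc_real_sqr.
Qed.

Definition prob_cross p x c : R :=
  \sum_(t < 2 ^ D) dotc (amp p (2 ^ K * t + c)) (amp x (2 ^ K * t + c)).

Lemma probD p x c : prob U (p + x) c = prob U p c + 2 * prob_cross p x c + prob U x c.
Proof.
rewrite !probE -sum_normcD_sqr; apply: eq_bigr => t _.
by rewrite ampD.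
Qed.

Lemma prob_cross_sqr_le p x c : prob_cross p x c ^+ 2 <= prob U p c * prob U x c.
Proof. by rewrite !probE; apply: sum_dotc_sqr_le. Qed.

Lemma sqnorm_embed q : \sum_r normc (embed K q r 0) ^+ 2 = vnorm q ^+ 2.
Proof.
have mul_inj : injective (fun s : 'I_(2 ^ D) => (2 ^ K * s)%N).
  by move=> a b /eqP; rewrite eqn_pmul2l ?expn_gt0 // => /eqP /val_inj.
under eq_bigr => j _ do rewrite mxE -rmorph_sum normc_real_sqr (sqr_sum_inj_fiber _ _ mul_inj).
rewrite vnorm_sqr (exchange_big_dep xpredT) //=; apply: eq_bigr => s _.
have s_lt : (2 ^ K * s < 2 ^ (D + K))%N.
  by rewrite expnD mulnC ltn_pmul2r ?expn_gt0.
by rewrite (eq_bigl (pred1 (Ordinal s_lt))) ?big_pred1_eq // => j /=.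
Qed.

Section Unitary.
Hypothesis U_unitary : U \is unitarymx.

Lemma sum_prob q : \sum_(c < 2 ^ K) prob U q c = vnorm q ^+ 2.
Proof.
pose g r := normc (mxat (outstate U q) r 0) ^+ 2.
transitivity (\sum_(0 <= r < 2 ^ D * 2 ^ K) g r).
  by rewrite sum_nat_mul_ord exchange_big.
rewrite -expnD big_mkord -sqnorm_embed -(sqnorm_unitary_mulmx _ U_unitary).
by apply: eq_bigr => r _; rewrite /g (mxat_ord _ r ord0).
Qed.

Lemma prob_add_le q (c1 c2 : 'I_(2 ^ K)) :
  c1 != c2 -> prob U q c1 + prob U q c2 <= vnorm q ^+ 2.
Proof.
move=> c12; rewrite -(sum_prob q) (bigD1 c1) // (bigD1 c2) /= ?(eq_sym c2) // addrA lerDl.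
by apply: sumr_ge0 => c _; apply: prob_ge0.
Qed.
End Unitary.

End Classifier.

Theorem theorem1 (R : rcfType) (D K k : nat) (U : 'M[R[i]]_(2 ^ (D + K)))
  (p : 'cV[R]_(2 ^ D)) (c c' : 'I_k) :
  (1 <= k <= 2 ^ K)%N ->
  U \is unitarymx ->
  p != 0 ->
  let ph := normalize p in
  (* c is the class predicted for ph *)
  (forall c2 : 'I_k, prob U ph c2 <= prob U ph c) ->
  (* c' is the runner-up class *)
  c' != c ->
  (forall c2 : 'I_k, c2 != c -> prob U ph c2 <= prob U ph c') ->
  let eps := Num.sqrt (1 + ((2 * 2 ^ D)%:R)^-1
                 * (qform (Mc U c) ph - qform (Mc U c') ph)) - 1 in
  0 < eps ->
  2 / (eps * Num.sqrt (4 - eps ^+ 2)) <= vnorm p ->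
  forall x : 'cV[R]_(2 ^ D), vnorm x = 1 ->
  let y := normalize (p + x) in
  forall c2 : 'I_k, prob U y c2 <= prob U y c.
Proof.
move=> /andP[_ k_le] U_unitary p_neq0 ph _ c'_neq_c runner_up eps eps_gt0 p_large
  x x_unit y c2.
have [-> | c2_neq_c] := eqVneq c2 c; first exact: lexx.
have prob_pair q (i j : 'I_k) : i != j -> prob U q i + prob U q j <= vnorm q ^+ 2.
  by move=> ij; apply: (@prob_add_le _ _ _ _ U_unitary q (widen_ord k_le i) (widen_ord k_le j)).
set r := vnorm p.
have r_gt0 : 0 < r := vnorm_gt0 p_neq0.
have margin : 2 <= r * (prob U ph c - prob U ph c').
  rewrite -!qform_Mc; apply: (eps_margin _ _ eps_gt0 p_large); first by rewrite expn_gt0.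
  have := prob_pair ph c c'; rewrite eq_sym c'_neq_c vnorm_normalize // expr1n !qform_Mc.
  by have := prob_ge0 U ph c'; lra.
rewrite /y /normalize !probZ ler_wpM2l ?sqr_ge0 // !probD.
apply: (perturbed_margin r_gt0); rewrite ?prob_ge0 ?prob_cross_sqr_le ?prob_pair //.
- have prob_p i : prob U p i = r ^+ 2 * prob U ph i.
    by rewrite -{1}(scale_vnorm_normalize p_neq0) probZ.
  rewrite !prob_p.
  have := ler_wpM2l (sqr_ge0 r) (runner_up c2 c2_neq_c).
  have := ler_wpM2l (ltW r_gt0) margin.
  nra.
- by rewrite eq_sym.
- by rewrite -(expr1n _ 2) -x_unit prob_pair // eq_sym.
Qed.
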